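(* Let $n,m\ge1$ and $\vec w\in\hat N^{n+m}$. Then there exist unique $\vec u\in\hat N^n$ and $\vec v\in\hat N^m$ such that $\vec u\nearrow\vec v\le\vec w\le\vec u\nwarrow\vec v$ (componentwise). Consequently the intervals $[\vec u\nearrow\vec v,\vec u\nwarrow\vec v]$, $(\vec u,\vec v)\in\hat N^n\times\hat N^m$, form a partition of $\hat N^{n+m}$.
   Context: $\hat N^n$ ($n\ge1$) is the set of names of planar rooted binary trees with $n$ internal vertices: writing a tree as a complete expression (full binary parenthesization, outermost product included) of $x_1\cdots x_{n+1}$, its name $\vec v\in\mathbb N^n$ has $v_i=i$ if at least one left parenthesis stands immediately left of $x_i$, and otherwise $v_i=j$ where the rightmost of the right parentheses immediately following $x_i$ matches a left parenthesis in the run immediately preceding $x_j$. For $\vec u\in\hat N^n,\vec v\in\hat N^m$: $\vec u\nearrow\vec v=(\vec u,n\triangleright v_1,\dots,n\triangleright v_m)$ with $n\triangleright a=a+n$ for $a\neq1$, $n\triangleright1=1$, and $\vec u\nwarrow\vec v=(u_1,\dots,u_n,v_1+n,\dots,v_m+n)$. Componentwise order: $\vec a\le\vec b$ iff $a_i\le b_i$ for all $i$; intervals are taken inside $\hat N^{n+m}$. *)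

From mathcomp Require Import all_boot.
Set Implicit Arguments. Unset Strict Implicit. Unset Printing Implicit Defensive.

Inductive btree := BLeaf | BNode of btree & btree.

Fixpoint internal (t : btree) : nat :=
  match t with BLeaf => 0 | BNode l r => (internal l + internal r).+1 end.

(* Tokens of a complete expression: LP = "(", RP = ")", X = a variable. *)
Definition tok := option bool.
Definition LP : tok := Some true.
Definition RP : tok := Some false.
Definition X  : tok := None.

(* The complete expression (full binary parenthesization, outermost product
   included) of the tree; the variables are read x_1, x_2, ... left to right. *)
Fixpoint expr (t : btree) : seq tok :=
  match t with
  | BLeaf => [:: X]
  | BNode l r => LP :: expr l ++ expr r ++ [:: RP]
  end.

Definition xpos (w : seq tok) : seq nat :=
  [seq p <- iota 0 (size w) | nth LP w p == X].
(* position of x_i (i >= 1) *)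
Definition leafpos (w : seq tok) (i : nat) : nat := nth 0 (xpos w) i.-1.
(* index j of the first variable x_j at or after position r *)
Definition leafidx (w : seq tok) (r : nat) : nat := (count (pred1 X) (take r w)).+1.
Definition hasLP (w : seq tok) (p : nat) : bool := (0 < p) && (nth X w p.-1 == LP).
Definition runRP (w : seq tok) (p : nat) : nat := find (fun c => c != RP) (drop p.+1 w).
Definition seg (w : seq tok) (r q : nat) : seq tok := take (q - r).+1 (drop r w).
(* position of the left parenthesis matching the right parenthesis at q *)
Definition matchLP (w : seq tok) (q : nat) : nat :=
  last 0 [seq r <- iota 0 q | (nth X w r == LP) &&
            (count (pred1 LP) (seg w r q) == count (pred1 RP) (seg w r q))].

Definition nameAt (w : seq tok) (i : nat) : nat :=
  let p := leafpos w i in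
  if hasLP w p then i else leafidx w (matchLP w (p + runRP w p)).

Definition name (t : btree) : seq nat :=
  [seq nameAt (expr t) i | i <- iota 1 (internal t)].

Definition Nhat (n : nat) (v : seq nat) : Prop :=
  exists t : btree, internal t = n /\ name t = v.

Definition tri (n a : nat) : nat := if a == 1 then 1 else a + n.

Definition nearrow (u v : seq nat) : seq nat := u ++ [seq tri (size u) a | a <- v].
Definition nwarrow (u v : seq nat) : seq nat := u ++ [seq a + size u | a <- v].

Definition vle (a b : seq nat) : bool := all2 leq a b.

From mathcomp Require Import all_boot zify.
Set Implicit Arguments.
Unset Strict Implicit.
Unset Printing Implicit Defensive.

(* Every leaf but the last is the rightmost leaf of the left subtree of exactly
   one node, and its entry in the name is the index of the first leaf of that
   left subtree.  Hence name (BNode l r) = name l ++ 1 :: [seq |l|.+1 + a | a <- name r],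
   and with this recursion: the first n entries of a name w of size n + m form a
   name u (cut the tree), the last m entries, with a mapped to 1 if a <= n + 1
   and to a - n otherwise, form a name v, and grafting a tree of v on the last
   leaf of a tree of u gives a tree named u ↖ v.  Uniqueness is entrywise:
   u <= w <= u on the first n entries, and tri n b <= a <= b + n determines b. *)

Lemma count_X_expr t : count (pred1 X) (expr t) = (internal t).+1.
Proof. by elim: t => [|l IHl r IHr] //=; rewrite !count_cat IHl IHr /=; lia. Qed.

Lemma count_LP_RP_expr t : count (pred1 LP) (expr t) = count (pred1 RP) (expr t).
Proof. by elim: t => [|l IHl r IHr] //=; rewrite !count_cat IHl IHr /=; lia. Qed.

Lemma take_expr_height t j :
  count (pred1 RP) (take j (expr t)) <= count (pred1 LP) (take j (expr t)).
Proof.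
elim: t j => [|l IHl r IHr] [|j] //=; rewrite add0n add1n take_cat.
case: ifP => _; first exact/leqW/IHl.
rewrite take_cat !count_cat count_LP_RP_expr -addnS leq_add2l.
case: ifP => _; first exact/leqW/IHr.
rewrite !count_cat count_LP_RP_expr -addnS leq_add2l.
by case: (_ - _ - _) => [|[|k]].
Qed.

Lemma take_expr_node_height_lt l r j : 0 < j < size (expr (BNode l r)) ->
  count (pred1 RP) (take j (expr (BNode l r)))
    < count (pred1 LP) (take j (expr (BNode l r))).
Proof.
case: j => [|j] //=; rewrite !size_cat /= add0n add1n !ltnS => j_lt.
rewrite take_cat; case: ifP => _; first exact: take_expr_height.
rewrite take_cat count_cat [count _ (_ ++ _)]count_cat count_LP_RP_expr leq_add2l.
case: ifP => _; first exact: take_expr_height.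
have -> : j - size (expr l) - size (expr r) = 0 by lia.
by rewrite !count_cat count_LP_RP_expr /= !addn0.
Qed.

Lemma drop_expr_node_unbalanced l r j : 0 < j < size (expr (BNode l r)) ->
  count (pred1 LP) (drop j (expr (BNode l r)))
    < count (pred1 RP) (drop j (expr (BNode l r))).
Proof.
move=> /take_expr_node_height_lt; have balanced := count_LP_RP_expr (BNode l r).
by rewrite -(cat_take_drop j (expr (BNode l r))) !count_cat in balanced; lia.
Qed.

Lemma xpos_cat x y : xpos (x ++ y) = xpos x ++ map (addn (size x)) (xpos y).
Proof.
rewrite /xpos size_cat iotaD filter_cat add0n -[n in iota n (size y)]addn0.
rewrite iotaDl filter_map; congr (_ ++ _).
  apply: eq_in_filter => q; rewrite mem_iota add0n => /andP[_ q_lt].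
  by rewrite nth_cat q_lt.
by congr map; apply: eq_filter => q /=; rewrite nth_cat ltnNge leq_addr addKn.
Qed.

Lemma size_xpos x : size (xpos x) = count (pred1 X) x.
Proof.
elim: x => [|a x IH] //.
by rewrite -cat1s xpos_cat size_cat size_map IH; case: a => [[]|].
Qed.

Lemma leafpos_count a b : leafpos (a ++ X :: b) (count (pred1 X) a).+1 = size a.
Proof.
by rewrite /leafpos -cat1s !xpos_cat nth_cat size_xpos ltnn subnn /= addn0.
Qed.

Fixpoint init_expr t :=
  if t is BNode l r then LP :: expr l ++ init_expr r else [::].

Fixpoint rdepth t := if t is BNode _ r then (rdepth r).+1 else 0.

Lemma expr_rightmost t : expr t = init_expr t ++ X :: nseq (rdepth t) RP.
Proof.
elim: t => [|l _ r IHr] //=; rewrite IHr -!catA /=.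
by rewrite -[[:: RP]]/(nseq 1 RP) -nseqD addn1.
Qed.

Lemma count_X_init_expr t : count (pred1 X) (init_expr t) = internal t.
Proof. by elim: t => [|l _ r IHr] //=; rewrite count_cat count_X_expr IHr. Qed.

Lemma last_expr t : last LP (expr t) != LP.
Proof. by case: t => [|l r] //=; rewrite !last_cat. Qed.

Lemma last_init_expr l r : last LP (init_expr (BNode l r)) != LP.
Proof.
elim: r l => [|r1 IH1 r2 IH2] l /=; rewrite last_cat; first exact: last_expr.
exact: IH2.
Qed.

Lemma nth_cat_mid (T : Type) (d : T) (p A y : seq T) j : j < size A ->
  nth d (p ++ A ++ y) (size p + j) = nth d A j.
Proof. by move=> j_lt; rewrite nth_cat ltnNge leq_addr addKn nth_cat j_lt. Qed.

Lemma seg_cat_end (p A y : seq tok) j : j < size A ->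
  seg (p ++ A ++ y) (size p + j) (size p + (size A).-1) = drop j A.
Proof.
move=> j_lt; rewrite /seg subnDl drop_cat ltnNge leq_addr addKn drop_cat j_lt.
have -> : ((size A).-1 - j).+1 = size A - j by lia.
by rewrite take_cat size_drop ltnn subnn take0 cats0.
Qed.

Lemma matchLP_node q l r y :
  matchLP (q ++ expr (BNode l r) ++ y) (size q + (size (expr (BNode l r))).-1)
  = size q.
Proof.
set A := expr (BNode l r); set w := q ++ A ++ y.
have [k sizeA] : exists k, (size A).-1 = k.+1.
  by exists (size (expr l) + size (expr r)); rewrite /A /= !size_cat /=; lia.
set P := fun j => (nth X w j == LP) &&
  (count (pred1 LP) (seg w j (size q + k.+1))
     == count (pred1 RP) (seg w j (size q + k.+1))).
have P_start : P (size q).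
  have := nth_cat_mid X q y (_ : 0 < size A); have := seg_cat_end q y (_ : 0 < size A).
  by rewrite /P /w !addn0 sizeA drop0 => -> // -> //; rewrite count_LP_RP_expr !eqxx.
have P_inside j : size q < j < size q + k.+1 -> ~~ P j.
  move=> j_range; rewrite /P /w negb_and -sizeA; apply/orP; right.
  have -> : j = size q + (j - size q) by lia.
  rewrite seg_cat_end; last by lia.
  by rewrite neq_ltn drop_expr_node_unbalanced //; rewrite -/A; lia.
rewrite /matchLP sizeA iotaD filter_cat last_cat add0n /= -/(P (size q)) P_start /=.
rewrite (eq_in_filter (a2 := pred0)) ?filter_pred0 // => j.
by rewrite mem_iota => j_range; apply/negbTE/P_inside; lia.
Qed.

Lemma nameAt_leaf_after_LP q y : last X q = LP ->
  nameAt (q ++ X :: y) (count (pred1 X) q).+1 = (count (pred1 X) q).+1.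
Proof.
move=> lastq; have q_gt0 : 0 < size q by case: q lastq.
by rewrite /nameAt leafpos_count /hasLP q_gt0 nth_cat ltn_predL q_gt0 nth_last lastq.
Qed.

Lemma nameAt_node_end q l r y : head X y != RP ->
  nameAt (q ++ expr (BNode l r) ++ y) (count (pred1 X) q + internal (BNode l r)).+1
  = (count (pred1 X) q).+1.
Proof.
move=> y_head; set t := BNode l r; set a := q ++ init_expr t.
have Ew : q ++ expr t ++ y = a ++ X :: nseq (rdepth t) RP ++ y.
  by rewrite {1}expr_rightmost /a -!catA.
have leafpos_a : leafpos (a ++ X :: nseq (rdepth t) RP ++ y)
    (count (pred1 X) q + internal t).+1 = size a.
  by rewrite -count_X_init_expr -count_cat leafpos_count.
have a_gt0 : 0 < size a by rewrite size_cat addnS.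
have no_LP : hasLP (a ++ X :: nseq (rdepth t) RP ++ y) (size a) = false.
  rewrite /hasLP a_gt0 nth_cat ltn_predL a_gt0 nth_last /a last_cat /=.
  exact/negbTE/last_init_expr.
have run_RP : runRP (a ++ X :: nseq (rdepth t) RP ++ y) (size a) = rdepth t.
  rewrite /runRP -cat_rcons drop_size_cat ?size_rcons // find_cat has_nseq eqxx andbC.
  rewrite size_nseq -[RHS]addn0; congr addn.
  by case: (y) y_head => [|c z] //= /negbTE ->.
have end_pos : size a + rdepth t = size q + (size (expr t)).-1.
  by rewrite [expr t]expr_rightmost /a !size_cat /= size_nseq; lia.
rewrite Ew /nameAt leafpos_a no_LP run_RP end_pos -Ew matchLP_node.
by rewrite /leafidx take_size_cat.
Qed.

Lemma nameAt_left_end p s l r :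
  nameAt (p ++ LP :: expr l ++ expr r ++ RP :: s) (count (pred1 X) p + internal l).+1
  = (count (pred1 X) p).+1.
Proof.
have <- : count (pred1 X) (rcons p LP) = count (pred1 X) p.
  by rewrite -cats1 count_cat addn0.
rewrite -cat_rcons; case: l => [|l1 l2].
  by rewrite addn0 nameAt_leaf_after_LP // last_rcons.
by rewrite nameAt_node_end //; case: r.
Qed.

Lemma nameAt_cat_expr p s t i : 0 < i <= internal t ->
  nameAt (p ++ expr t ++ s) (count (pred1 X) p + i)
  = count (pred1 X) p + nameAt (expr t) i.
Proof.
elim: t p s i => [|l IHl r IHr] p s i /andP[i_gt0 i_le]; rewrite /= in i_le; first by lia.
case: (ltngtP i (internal l).+1) => [i_lt | i_gt | ->].
- have -> : p ++ expr (BNode l r) ++ s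
      = (p ++ [:: LP]) ++ expr l ++ (expr r ++ RP :: s) by rewrite /= -!catA.
  have -> : expr (BNode l r) = [:: LP] ++ expr l ++ (expr r ++ [:: RP]) by [].
  have count_LP : count (pred1 X) (p ++ [:: LP]) = count (pred1 X) p.
    by rewrite count_cat addn0.
  by rewrite -count_LP IHl ?i_gt0 // -[i]add0n IHl ?i_gt0.
- have -> : p ++ expr (BNode l r) ++ s
      = (p ++ LP :: expr l) ++ expr r ++ (RP :: s) by rewrite /= -!catA.
  have -> : expr (BNode l r) = (LP :: expr l) ++ expr r ++ [:: RP] by [].
  have -> : i = count (pred1 X) (LP :: expr l) + (i - (internal l).+1).
    by rewrite /= count_X_expr; lia.
  rewrite addnA -count_cat !IHr; try by apply/andP; lia.
  by rewrite count_cat addnA.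
- have -> : p ++ expr (BNode l r) ++ s
      = p ++ LP :: expr l ++ expr r ++ RP :: s by rewrite /= -!catA.
  have -> : expr (BNode l r) = [::] ++ LP :: expr l ++ expr r ++ [:: RP] by [].
  rewrite addnS nameAt_left_end.
  rewrite -[(internal l).+1]/((count (pred1 X) [::] + internal l).+1).
  by rewrite nameAt_left_end addn1.
Qed.

Lemma name_node l r :
  name (BNode l r) = name l ++ 1 :: map (addn (internal l).+1) (name r).
Proof.
rewrite /name [internal _]/= -addnS iotaD map_cat; congr (_ ++ _).
  apply/eq_in_map => i; rewrite mem_iota => /andP[i_gt0 i_le].
  have i_range : 0 < i <= internal l by rewrite i_gt0; lia.
  by have /= := nameAt_cat_expr [:: LP] (expr r ++ [:: RP]) i_range.
rewrite add1n /=; congr (_ :: _); first by have /= := nameAt_left_end [::] [::] l r.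
rewrite -(addn1 (internal l).+1) iotaDl -!map_comp.
apply/eq_in_map => j; rewrite mem_iota => /andP[j_gt0 j_le].
have j_range : 0 < j <= internal r by rewrite j_gt0; lia.
by have /= := nameAt_cat_expr (LP :: expr l) [:: RP] j_range; rewrite count_X_expr.
Qed.

Definition untri (n a : nat) : nat := if a <= n.+1 then 1 else a - n.

Lemma untri_shift c j b : untri (c + j) (c + b) = untri j b.
Proof. by rewrite /untri -addnS leq_add2l subnDl. Qed.

Lemma untri_addn k c a : k <= c -> 0 < a -> untri k (c.+1 + a) = (c - k).+1 + a.
Proof. by rewrite /untri => k_le a_gt0; case: ifP; lia. Qed.

Lemma tri_untri_le n a : 0 < a -> tri n (untri n a) <= a.
Proof.
by rewrite /untri; case: ifP => a_le a_gt0; rewrite /tri ?eqxx //=; case: eqP; lia.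
Qed.

Lemma le_untri_addn n a : a <= untri n a + n.
Proof. by rewrite /untri; case: ifP; lia. Qed.

Lemma tri_le_addn n a : tri n a <= a + n.
Proof. by rewrite /tri; case: eqP => [->|]. Qed.

Lemma untri_eq n a b : 0 < b -> tri n b <= a <= b + n -> untri n a = b.
Proof. by rewrite /tri /untri; case: eqP => [->|b_neq1]; case: ifP; lia. Qed.

Lemma size_name t : size (name t) = internal t.
Proof. by rewrite size_map size_iota. Qed.

Lemma name_gt0 t : all (leq 1) (name t).
Proof.
by elim: t => [|l IHl r IHr] //; rewrite name_node all_cat IHl /= all_map; apply/allP.
Qed.

Lemma take_cat_le (T : Type) k (s1 s2 : seq T) :
  k <= size s1 -> take k (s1 ++ s2) = take k s1.
Proof.
rewrite leq_eqVlt => /predU1P[->|k_lt]; first by rewrite take_size_cat ?take_size.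
by rewrite take_cat k_lt.
Qed.

Lemma drop_cat_le (T : Type) k (s1 s2 : seq T) :
  k <= size s1 -> drop k (s1 ++ s2) = drop k s1 ++ s2.
Proof.
by move=> k_le; rewrite -{1}(cat_take_drop k s1) -catA drop_size_cat ?size_takel.
Qed.

Lemma Nhat_take_name t k : k <= internal t -> Nhat k (take k (name t)).
Proof.
elim: t k => [|l IHl r IHr] k k_le.
  by move: k_le; rewrite leqn0 => /eqP ->; exists BLeaf.
rewrite name_node; case: (leqP k (internal l)) => [k_le_l | k_gt_l].
  by rewrite take_cat_le ?size_name //; apply: IHl.
have [j Ej] : exists j, k - internal l = j.+1 by exists (k - (internal l).+1); lia.
have j_le : j <= internal r by rewrite /= in k_le; lia.
have [t' [internal_t' name_t']] := IHr j j_le.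
exists (BNode l t'); split; first by rewrite /= internal_t'; lia.
by rewrite name_node take_cat size_name ltnNge (ltnW k_gt_l) Ej /= name_t' map_take.
Qed.

Lemma Nhat_drop_name t k : k <= internal t ->
  Nhat (internal t - k) (map (untri k) (drop k (name t))).
Proof.
elim: t k => [|l IHl r IHr] k k_le.
  by move: k_le; rewrite leqn0 => /eqP ->; exists BLeaf.
rewrite name_node; case: (leqP k (internal l)) => [k_le_l | k_gt_l].
  have [t' [internal_t' name_t']] := IHl k k_le_l.
  exists (BNode t' r); split; first by rewrite /= internal_t'; lia.
  rewrite drop_cat_le ?size_name // map_cat name_node name_t' internal_t' /=.
  congr (_ ++ _ :: _).
  rewrite -map_comp; apply/eq_in_map => a /(allP (name_gt0 r)) a_gt0 /=.
  by rewrite untri_addn.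
have [j Ej] : exists j, k = (internal l).+1 + j by exists (k - (internal l).+1); lia.
have j_le : j <= internal r by rewrite /= in k_le; lia.
have [t' [internal_t' name_t']] := IHr j j_le.
exists t'; split; first by rewrite /= internal_t' Ej; lia.
rewrite drop_cat size_name ltnNge (ltnW k_gt_l) /=.
have -> : k - internal l = j.+1 by lia.
rewrite /= -map_drop -map_comp name_t'; apply/eq_map => a /=.
by rewrite Ej untri_shift.
Qed.

Fixpoint graft t1 t2 := if t1 is BNode l r then BNode l (graft r t2) else t2.

Lemma internal_graft t1 t2 : internal (graft t1 t2) = internal t1 + internal t2.
Proof. by elim: t1 => //= l _ r ->; rewrite addSn addnA. Qed.

Lemma name_graft t1 t2 : name (graft t1 t2) = nwarrow (name t1) (name t2).
Proof.
rewrite /nwarrow; elim: t1 => [|l _ r IHr]; rewrite [graft _ _]/=.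
  by rewrite map_id_in // => a _; rewrite addn0.
rewrite !name_node IHr map_cat -catA /= -map_comp size_cat /= size_map !size_name.
by congr (_ ++ _ :: _ ++ _); apply/eq_map => a /=; lia.
Qed.

Lemma Nhat_size k u : Nhat k u -> size u = k.
Proof. by case=> t [<- <-]; rewrite size_name. Qed.

Lemma Nhat_gt0 k u : Nhat k u -> all (leq 1) u.
Proof. by case=> t [_ <-]; apply: name_gt0. Qed.

Lemma Nhat_take n m w : Nhat (n + m) w -> Nhat n (take n w).
Proof.
by case=> t [internal_t <-]; apply: Nhat_take_name; rewrite internal_t leq_addr.
Qed.

Lemma Nhat_drop n m w : Nhat (n + m) w -> Nhat m (map (untri n) (drop n w)).
Proof.
case=> t [internal_t <-]; rewrite -[m](addKn n) -internal_t.
by apply: Nhat_drop_name; rewrite internal_t leq_addr.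
Qed.

Lemma Nhat_nwarrow n m u v : Nhat n u -> Nhat m v -> Nhat (n + m) (nwarrow u v).
Proof.
case=> t1 [<- <-] [t2 [<- <-]].
by exists (graft t1 t2); rewrite internal_graft name_graft.
Qed.

Lemma vle_size a b : vle a b -> size a = size b.
Proof. by elim: a b => [|x a IH] [|y b] //= /andP[_ /IH ->]. Qed.

Lemma vle_refl a : vle a a.
Proof. by elim: a => //= x a ->; rewrite leqnn. Qed.

Lemma vle_anti a b : vle a b -> vle b a -> a = b.
Proof.
elim: a b => [|x a IH] [|y b] //= /andP[xy ab] /andP[yx ba].
by rewrite (IH _ ab ba) (@anti_leq x y) ?xy.
Qed.

Lemma vle_cat a b c d : size a = size c -> vle (a ++ b) (c ++ d) = vle a c && vle b d.
Proof. by elim: a c => [|x a IH] [|y c] //= [/IH ->]; rewrite andbA. Qed.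

Lemma vle_map (f g : nat -> nat) (s : seq nat) :
  {in s, forall a, f a <= g a} -> vle (map f s) (map g s).
Proof.
elim: s => //= a s IH fg; rewrite fg ?mem_head //=.
by apply: IH => b b_s; rewrite fg // in_cons b_s orbT.
Qed.

Lemma vle_nearrow_nwarrow u v : vle (nearrow u v) (nwarrow u v).
Proof.
by rewrite /nearrow /nwarrow vle_cat // vle_refl vle_map // => a _; apply: tri_le_addn.
Qed.

Lemma vle_nearrow_take_drop n w : n <= size w -> all (leq 1) w ->
  vle (nearrow (take n w) (map (untri n) (drop n w))) w.
Proof.
move=> n_le w_gt0; rewrite /nearrow size_takel // -[w in vle _ w](cat_take_drop n).
rewrite vle_cat // vle_refl.
rewrite -map_comp -{2}[drop n w]map_id vle_map // => a a_w /=.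
by apply: tri_untri_le; apply: (allP w_gt0); apply: mem_drop a_w.
Qed.

Lemma vle_nwarrow_take_drop n w : n <= size w ->
  vle w (nwarrow (take n w) (map (untri n) (drop n w))).
Proof.
move=> n_le; rewrite /nwarrow size_takel // -[w in vle w _](cat_take_drop n).
rewrite vle_cat ?size_takel // vle_refl -map_comp -{1}[drop n w]map_id.
by rewrite vle_map // => a _; apply: le_untri_addn.
Qed.

Lemma sandwich_take_drop n u v w : size u = n -> all (leq 1) v ->
  vle (nearrow u v) w -> vle w (nwarrow u v) ->
  u = take n w /\ v = map (untri n) (drop n w).
Proof.
move=> <- v_gt0 lo hi; have take_size : size (take (size u) w) = size u.
  by rewrite size_takel // (vle_size hi) size_cat leq_addr.
rewrite /nearrow /nwarrow -(cat_take_drop (size u) w) !vle_cat // in lo hi.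
case/andP: lo hi => [u_lo v_lo] /andP[u_hi v_hi].
split; first exact: vle_anti.
elim: v (drop (size u) w) v_gt0 v_lo v_hi => [|b v IH] [|a d] //= /andP[b_gt0 v_gt0].
case/andP=> lo_a lo_d /andP[hi_a hi_d].
by rewrite (untri_eq b_gt0) ?lo_a // -(IH d).
Qed.

Theorem mainTheorem13 (n m : nat) :
  1 <= n -> 1 <= m ->
  (forall w : seq nat, Nhat (n + m) w ->
     exists! uv : seq nat * seq nat,
       [/\ Nhat n uv.1, Nhat m uv.2,
           vle (nearrow uv.1 uv.2) w & vle w (nwarrow uv.1 uv.2)]) /\
  (forall u v : seq nat, Nhat n u -> Nhat m v ->
     exists w : seq nat,
       [/\ Nhat (n + m) w, vle (nearrow u v) w & vle w (nwarrow u v)]).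
Proof.
(* The statement also holds for n = 0 or m = 0. *)
move=> _ _; split=> [w w_Nhat | u v u_Nhat v_Nhat].
  have n_le : n <= size w by rewrite (Nhat_size w_Nhat) leq_addr.
  exists (take n w, map (untri n) (drop n w)); split.
    split; [exact: Nhat_take w_Nhat | exact: Nhat_drop w_Nhat | |
            exact: vle_nwarrow_take_drop].
    exact: vle_nearrow_take_drop (Nhat_gt0 w_Nhat).
  case=> u v [/= u_Nhat v_Nhat lo hi].
  by have [-> ->] := sandwich_take_drop (Nhat_size u_Nhat) (Nhat_gt0 v_Nhat) lo hi.
exists (nwarrow u v).
by split; [exact: Nhat_nwarrow | exact: vle_nearrow_nwarrow | exact: vle_refl].
Qed.
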